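(* Let $4\le p<n$ and let $a^\top x\le a_0$ be a facet defining inequality for $P^p_{0,n}(D)$. Let $\gamma$ be the maximum of $a(C)=\sum_{(i,j)\in C}a_{ij}$ over all simple directed cycles $C$ in $D$ with exactly $p$ arcs (such cycles use only internal nodes $1,\dots,n-1$). Set $a_{ni}:=a_{0i}$ for $i=1,\dots,n-1$. Then the inequality $$\sum_{i=1}^n\sum_{j=1,\,j\neq i}^n a_{ij}x_{ij}+(\gamma-a_0)\,x(\delta^+(n))\le\gamma$$ defines a facet of the $p$-cycle polytope $P^p_C(D_n)$.
   Context: Let $n$ be a positive integer, $V=\{0,1,\dots,n\}$, and let $D=(V,A)$ be the digraph whose arc set $A$ consists of all ordered pairs $(i,j)$ with $i\neq j$, $i,j\in V$, except that no arc enters node $0$, no arc leaves node $n$, and the arc $(0,n)$ is absent. A $(0,n)$-$p$-path is a simple directed path in $D$ from $0$ to $n$ with exactly $p$ arcs; $P^p_{0,n}(D)\subseteq\mathbb{R}^A$ is the convex hull of their incidence vectors. $D_n$ is the complete digraph on node set $\{1,\dots,n\}$ (all arcs $(i,j)$, $i\neq j$), and $P^p_C(D_n)$ is the convex hull in $\mathbb{R}^{A(D_n)}$ of the incidence vectors of all simple directed cycles in $D_n$ with exactly $p$ arcs. In $D_n$, $\delta^+(n)$ is the set of arcs leaving $n$ and $x(F)=\sum_{e\in F}x_e$. The coefficients $a_{in}$ ($1\le i\le n-1$) and $a_{ij}$ ($1\le i\neq j\le n-1$) are those of the given inequality on $D$. *)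

From mathcomp Require Import all_boot all_order all_algebra.
Unset Printing Implicit Defensive.
Import Order.TTheory GRing.Theory Num.Theory.
Local Open Scope ring_scope.

Section Polyhedra.
Variables (R : realFieldType) (T : finType).

Definition dotp (a x : T -> R) : R := \sum_(e : T) a e * x e.

Definition in_conv (S : (T -> R) -> Prop) (x : T -> R) : Prop :=
  exists (ps : seq (T -> R)) (lam : nat -> R),
    (forall i, (i < size ps)%N -> S (nth (fun _ => 0) ps i) /\ 0 <= lam i) /\
    \sum_(i < size ps) lam i = 1 /\
    forall e, x e = \sum_(i < size ps) lam i * nth (fun _ => 0) ps i e.

Definition aff_indep (ps : seq (T -> R)) : Prop :=
  forall lam : nat -> R,
    \sum_(i < size ps) lam i = 0 ->
    (forall e, \sum_(i < size ps) lam i * nth (fun _ => 0) ps i e = 0) ->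
    forall i, (i < size ps)%N -> lam i = 0.

(* aff_rank P r : the maximum number of affinely independent points of P is r,
   i.e. dim P = r - 1 (with dim of the empty set = -1) *)
Definition aff_rank (P : (T -> R) -> Prop) (r : nat) : Prop :=
  (exists ps : seq (T -> R), size ps = r /\
     (forall i, (i < size ps)%N -> P (nth (fun _ => 0) ps i)) /\ aff_indep ps) /\
  (forall ps : seq (T -> R),
     (forall i, (i < size ps)%N -> P (nth (fun _ => 0) ps i)) ->
     aff_indep ps -> (size ps <= r)%N).

Definition facet_defining (P : (T -> R) -> Prop) (a : T -> R) (a0 : R) : Prop :=
  (forall x, P x -> dotp a x <= a0) /\
  exists r : nat, aff_rank P r.+1 /\ aff_rank (fun x => P x /\ dotp a x = a0) r.

End Polyhedra.

(* Nodes are ordinals 'I_n.+1 = {0,...,n}; node 0 is ord0, node n is ord_max. *)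
Definition node n := 'I_n.+1.

Definition arcD n (e : node n * node n) : bool :=
  [&& e.1 != e.2, e.2 != ord0, e.1 != ord_max & e != (ord0, ord_max)].

(* arcs of the complete digraph D_n on {1,...,n} (nodes 1..n of 'I_n.+1) *)
Definition arcDn n (e : node n * node n) : bool :=
  [&& e.1 != e.2, e.1 != ord0 & e.2 != ord0].

Definition arcTD n := {e : node n * node n | arcD n e}.
Definition arcTDn n := {e : node n * node n | arcDn n e}.

Definition path_arcs n (s : seq (node n)) := zip s (behead s).
Definition cycle_arcs n (c : seq (node n)) := zip c (rot 1 c).

Definition is_0n_path n p (s : seq (node n)) : bool :=
  [&& size s == p.+1, uniq s, head ord0 s == ord0, last ord0 s == ord_max
    & all (arcD n) (path_arcs n s)].

Definition is_p_cycle n (A : pred (node n * node n)) p (c : seq (node n)) : bool :=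
  [&& size c == p, uniq c & all A (cycle_arcs n c)].

Definition incid (R : realFieldType) n (A : pred (node n * node n))
    (arcs : seq (node n * node n)) : {e | A e} -> R :=
  fun e => if val e \in arcs then 1 else 0.

Definition P_path (R : realFieldType) n p : (arcTD n -> R) -> Prop :=
  in_conv R _ (fun x => exists s, is_0n_path n p s /\
                      forall e, x e = incid R n (arcD n) (path_arcs n s) e).

Definition P_cycle (R : realFieldType) n p : (arcTDn n -> R) -> Prop :=
  in_conv R _ (fun x => exists c, is_p_cycle n (arcDn n) p c /\
                      forall e, x e = incid R n (arcDn n) (cycle_arcs n c) e).

Definition weight (R : realFieldType) n (a : node n -> node n -> R)
    (arcs : seq (node n * node n)) : R :=
  \sum_(e <- arcs) a e.1 e.2.

(* Renaming the tail [n] of arcs into [0] identifies the arcs of [D_n] with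
   those of [D], the (0,n)-paths of [D] with the p-cycles of [D_n] through [n],
   and the p-cycles of [D_n] avoiding [n] with the p-cycles of [D].  On a lifted
   path the new inequality reads [a x + (gamma - a0) <= gamma], since a path
   leaves [0] exactly once, and on a cycle avoiding [n] it reads [a(C) <= gamma];
   this gives validity, and maps the face of [P_{0,n}] into the new face.
   A cycle [C0] avoiding [n] with [a(C0) = gamma] is affinely independent of
   the lifted paths (which all leave [n] once), which raises both dimensions by
   one.  Conversely every cycle [C] avoiding [n] lies in the affine hull of the
   lifted paths and [C0]: replacing in turn each node of [C] by [n] yields
   cycles through [n] summing to [(p-2) C] plus the stars [(n,x) + (x,n)] of
   its nodes, and the difference of two stars is a combination of cycles
   through [n] because [4 <= p < n]. *)

From mathcomp Require Import all_boot all_order all_algebra zify ring lra.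
Import Order.TTheory GRing.Theory Num.Theory.

Set Implicit Arguments.
Unset Strict Implicit.
Unset Printing Implicit Defensive.

Local Open Scope ring_scope.

Section AffineIndependence.
Variables (R : realFieldType) (T : finType).
Local Notation V := {ffun option T -> R^o}.
Local Notation nth0 := (nth (fun _ : T => 0 : R)).

(* Points are affinely independent iff their homogenizations [(x, 1)] are
   linearly independent. *)
Definition homog (x : T -> R) : V := [ffun o => if o is Some e then x e else 1].

Lemma homog_ext (x y : T -> R) : (forall e, x e = y e) -> homog x = homog y.
Proof. by move=> xy; apply/ffunP => -[e|]; rewrite !ffunE ?xy. Qed.

Lemma sum_homogE (m : nat) (lam : nat -> R) (f : nat -> T -> R) o :
  (\sum_(i < m) lam i *: homog (f i)) o =
  \sum_(i < m) lam i * (if o is Some e then f i e else 1).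
Proof. by rewrite sum_ffunE; apply: eq_bigr => i _; rewrite !ffunE. Qed.

Lemma free_natP (X : seq V) : free X <->
  forall lam : nat -> R, \sum_(i < size X) lam i *: X`_i = 0 ->
    forall i, (i < size X)%N -> lam i = 0.
Proof.
split.
  move=> /(@vector.freeP _ _ _ (in_tuple X)) freeX lam lamX i ltiX.
  exact: (freeX (fun j : 'I_(size X) => lam j) lamX (Ordinal ltiX)).
move=> freeX; apply/(@vector.freeP _ _ _ (in_tuple X)) => k kX i.
pose lam j := if insub j is Some i' then k i' else 0.
have lamE (j : 'I_(size X)) : lam j = k j by rewrite /lam valK.
rewrite -lamE; apply: freeX => //.
by rewrite -[RHS]kX; apply: eq_bigr => j _; rewrite lamE.
Qed.

Lemma aff_indep_free (ps : seq (T -> R)) :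
  aff_indep R T ps <-> free (map homog ps).
Proof.
have combE (lam : nat -> R) :
    \sum_(i < size (map homog ps)) lam i *: (map homog ps)`_i =
    \sum_(i < size ps) lam i *: homog (nth0 ps i).
  by rewrite size_map; apply: eq_bigr => i _; rewrite (nth_map (fun _ => 0)).
split.
  move=> indep; apply/free_natP => lam; rewrite combE size_map => /ffunP comb0.
  apply: indep => [|e]; last by have := comb0 (Some e); rewrite sum_homogE ffunE.
  by have := comb0 None; rewrite sum_homogE ffunE; under eq_bigr do rewrite mulr1.
move=> /free_natP freeX lam sum0 comb0 i ltips.
apply: freeX; last by rewrite size_map.
rewrite combE; apply/ffunP => o; rewrite sum_homogE ffunE.
case: o => [e|]; first by rewrite comb0.
by under eq_bigr do rewrite mulr1.
Qed.

Lemma eq_dotp (w x y : T -> R) : (forall e, x e = y e) -> dotp R T w x = dotp R T w y.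
Proof. by move=> xy; apply: eq_bigr => e _; rewrite xy. Qed.

Lemma dotp_comb (w : T -> R) (ps : seq (T -> R)) (lam : nat -> R) x :
  (forall e, x e = \sum_(i < size ps) lam i * nth0 ps i e) ->
  dotp R T w x = \sum_(i < size ps) lam i * dotp R T w (nth0 ps i).
Proof.
move=> xE; rewrite /dotp; under eq_bigr do rewrite xE mulr_sumr.
rewrite exchange_big; apply: eq_bigr => i _; rewrite mulr_sumr.
by apply: eq_bigr => e _; rewrite mulrCA.
Qed.

Lemma aff_indep_cons (w : T -> R) (w0 : R) (x : T -> R) (ps : seq (T -> R)) :
  aff_indep R T ps -> (forall i, (i < size ps)%N -> dotp R T w (nth0 ps i) = w0) ->
  dotp R T w x != w0 -> aff_indep R T (x :: ps).
Proof.
move=> indep w_ps w_x lam; rewrite /= big_ord_recl => sum0 comb0.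
pose mu i := lam i.+1.
have mu_sum : \sum_(i < size ps) mu i = - lam 0%N.
  apply/eqP; rewrite -addr_eq0 addrC -[X in _ == X]sum0.
  by apply/eqP; congr (_ + _).
have mu_comb e : - (lam 0%N * x e) = \sum_(i < size ps) mu i * nth0 ps i e.
  apply/esym/eqP; rewrite -addr_eq0 addrC -[X in _ == X](comb0 e) big_ord_recl.
  by apply/eqP; congr (_ + _).
have lam0 : lam 0%N = 0.
  have dotE : dotp R T w (fun e => - (lam 0%N * x e)) = - (lam 0%N * dotp R T w x).
    by rewrite /dotp mulr_sumr -sumrN; apply: eq_bigr => e _; rewrite mulrN mulrCA.
  have w_comb : \sum_(i < size ps) mu i * dotp R T w (nth0 ps i) = - lam 0%N * w0.
    by rewrite -mu_sum mulr_suml; apply: eq_bigr => i _; rewrite w_ps.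
  have := dotp_comb w mu_comb; rewrite w_comb dotE mulNr => /oppr_inj/eqP.
  by rewrite -subr_eq0 -mulrBr mulf_eq0 subr_eq0 (negbTE w_x) orbF => /eqP.
case=> [//|i]; rewrite ltnS => ltips.
apply: (indep mu) i ltips; first by rewrite mu_sum lam0 oppr0.
by move=> e; rewrite -mu_comb lam0 mul0r oppr0.
Qed.

Lemma in_conv_point (S : (T -> R) -> Prop) x : S x -> in_conv R T S x.
Proof.
move=> Sx; exists [:: x], (fun _ => 1); split; first by case.
by split=> [|e]; rewrite big_ord1 ?mul1r.
Qed.

Lemma dotp_in_conv_le (S : (T -> R) -> Prop) (w : T -> R) (k : R) x :
  (forall y, S y -> dotp R T w y <= k) -> in_conv R T S x -> dotp R T w x <= k.
Proof.
move=> w_S [ps [lam [S_ps [lam1 xE]]]]; rewrite (dotp_comb w xE).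
apply: le_trans (_ : \sum_(i < size ps) lam i * k <= k); last by rewrite -mulr_suml lam1 mul1r.
by apply: ler_sum => i _; have [/w_S ? ?] := S_ps i (ltn_ord i); apply: ler_wpM2l.
Qed.

Lemma dotp_in_conv_eq (S : (T -> R) -> Prop) (w : T -> R) (k : R) x :
  (forall y, S y -> dotp R T w y = k) -> in_conv R T S x -> dotp R T w x = k.
Proof.
move=> w_S [ps [lam [S_ps [lam1 xE]]]]; rewrite (dotp_comb w xE).
rewrite -[RHS]mul1r -lam1 mulr_suml; apply: eq_bigr => i _.
by have [/w_S -> _] := S_ps i (ltn_ord i).
Qed.

Lemma homog_in_conv (S : (T -> R) -> Prop) (W : {vspace V}) x :
  (forall y, S y -> homog y \in W) -> in_conv R T S x -> homog x \in W.
Proof.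
move=> W_S [ps [lam [S_ps [lam1 xE]]]].
have -> : homog x = \sum_(i < size ps) lam i *: homog (nth0 ps i).
  apply/ffunP => o; rewrite sum_homogE ffunE; case: o => [e|]; first by rewrite xE.
  by under [RHS]eq_bigr do rewrite mulr1.
by apply: memv_suml => i _; apply/memvZ/W_S; have [] := S_ps i (ltn_ord i).
Qed.

Lemma free_subseq_span (A : eqType) (h : A -> V) (X : seq A) :
  exists Y, [/\ {subset Y <= X}, free (map h Y) & <<map h Y>>%VS = <<map h X>>%VS].
Proof.
elim: X => [|x X [Y [sYX freeY spanY]]].
  by exists [::]; split=> //; rewrite /free span_nil dimv0.
have sYxX : {subset Y <= x :: X} by move=> y /sYX; rewrite inE => ->; rewrite orbT.
case hxY: (h x \in <<map h Y>>%VS).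
  exists Y; split=> //=; rewrite span_cons -spanY; apply/eqP.
  by rewrite eqEsubv addvSr subv_add subvv andbT -memvE.
exists (x :: Y); split; last by rewrite /= !span_cons spanY.
  by move=> y; rewrite !inE => /orP[-> //|/sYxX].
by rewrite /= free_cons hxY freeY.
Qed.

Lemma aff_indep_size_le_dim (P : (T -> R) -> Prop) (W : {vspace V}) ps :
  (forall x, P x -> homog x \in W) -> (forall i, (i < size ps)%N -> P (nth0 ps i)) ->
  aff_indep R T ps -> (size ps <= \dim W)%N.
Proof.
move=> W_P P_ps /aff_indep_free freeps; rewrite -(size_map homog) -(eqP freeps).
apply: dimvS; apply/span_subvP => _ /(nthP 0) [i ltips <-].
by rewrite size_map in ltips; rewrite (nth_map (fun _ => 0)) //; apply/W_P/P_ps.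
Qed.

Lemma exists_off_face (P : (T -> R) -> Prop) (w : T -> R) (w0 : R) (r : nat) :
  aff_rank R T P r.+1 ->
  (forall ps, (forall i, (i < size ps)%N -> P (nth0 ps i) /\ dotp R T w (nth0 ps i) = w0) ->
     aff_indep R T ps -> (size ps <= r)%N) ->
  exists2 y, P y & dotp R T w y != w0.
Proof.
move=> [[ps [sps [P_ps indep]]] _] rank_face.
have [[i w_i]|] := pickP (fun i : 'I_(size ps) => dotp R T w (nth0 ps i) != w0).
  by exists (nth0 ps i) => //; apply: P_ps.
move=> on_face; suff : (size ps <= r)%N by rewrite sps ltnn.
apply: rank_face indep => i ltips; split; first exact: P_ps.
by apply/eqP; have := on_face (Ordinal ltips); rewrite /= => /negbFE.
Qed.
End AffineIndependence.

Section Transport.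
Variables (R : realFieldType) (T1 T2 : finType) (g : T2 -> T1).
Hypothesis g_bij : bijective g.
Local Notation nth0 := (nth (fun _ => 0 : R)).

Lemma aff_indep_comp (ps : seq (T1 -> R)) :
  aff_indep R T2 (map (fun x => x \o g) ps) <-> aff_indep R T1 ps.
Proof.
have [g' gK g'K] := g_bij; rewrite /aff_indep size_map.
have combE (lam : nat -> R) e2 :
    \sum_(i < size ps) lam i * nth0 (map (fun x => x \o g) ps) i e2 =
    \sum_(i < size ps) lam i * nth0 ps i (g e2).
  by apply: eq_bigr => i _; rewrite (nth_map (fun _ => 0)).
split=> indep lam sum0 comb0 i ltips; apply: indep sum0 _ i ltips.
  by move=> e2; rewrite combE comb0.
by move=> e1; rewrite -(g'K e1) -combE comb0.
Qed.

Lemma in_conv_comp (S1 : (T1 -> R) -> Prop) (S2 : (T2 -> R) -> Prop) x :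
  (forall y, S1 y -> S2 (y \o g)) -> in_conv R T1 S1 x -> in_conv R T2 S2 (x \o g).
Proof.
move=> S12 [ps [lam [S_ps [lam1 xE]]]].
exists (map (fun y => y \o g) ps), lam; rewrite size_map; split.
  by move=> i ltips; rewrite (nth_map (fun _ => 0)) //; have [/S12] := S_ps i ltips.
split=> // e; rewrite /= xE; apply: eq_bigr => i _.
by rewrite (nth_map (fun _ => 0)).
Qed.

Lemma dotp_comp (g' : T1 -> T2) (w : T2 -> R) (x : T1 -> R) :
  cancel g g' -> cancel g' g -> dotp R T2 w (x \o g) = dotp R T1 (w \o g') x.
Proof.
move=> gK g'K; rewrite /dotp (reindex g') /=; last by exists g => e _; [apply: g'K | apply: gK].
by apply: eq_bigr => e _; rewrite g'K.
Qed.

Lemma dim_span_homog_comp_le (P : (T1 -> R) -> Prop) (r : nat) (A : eqType)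
    (f : A -> T1 -> R) (X : seq A) :
  (forall ps, (forall i, (i < size ps)%N -> P (nth0 ps i)) -> aff_indep R T1 ps ->
     (size ps <= r)%N) ->
  (forall s, s \in X -> P (f s)) ->
  (\dim <<map (fun s => homog (f s \o g)) X>> <= r)%N.
Proof.
move=> rankP P_X; have [Y [sYX freeY <-]] := free_subseq_span (fun s => homog (f s \o g)) X.
rewrite (eqP freeY) size_map -(size_map f); apply: rankP.
  case: Y sYX {freeY} => [//|y0 Y] sYX i; rewrite size_map => ltiY.
  by rewrite (set_nth_default (f y0)) ?size_map // (nth_map y0) //; apply/P_X/sYX/mem_nth.
apply/aff_indep_comp/aff_indep_free.
by rewrite -!map_comp.
Qed.
End Transport.

Section Relabeling.
Variable n : nat.
Hypothesis n_gt0 : (0 < n)%N.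
Local Notation N := (node n).
Local Notation o0 := (@ord0 n).
Local Notation on := (@ord_max n).

Lemma ord_max_eq0 : (on == o0) = false.
Proof. by apply/negbTE; rewrite -val_eqE /= -lt0n. Qed.

Lemma ord0_eq_max : (o0 == on) = false.
Proof. by rewrite eq_sym ord_max_eq0. Qed.

Definition swap0n (x : N) : N := if x == o0 then on else if x == on then o0 else x.

Lemma swap0n_id x : x != o0 -> x != on -> swap0n x = x.
Proof. by move=> x0 xn; rewrite /swap0n (negbTE x0) (negbTE xn). Qed.

Lemma swap0n0 : swap0n o0 = on. Proof. by rewrite /swap0n eqxx. Qed.

Lemma swap0nn : swap0n on = o0. Proof. by rewrite /swap0n ord_max_eq0 eqxx. Qed.

Lemma swap0nK : involutive swap0n.
Proof.
move=> x; have [->|x0] := eqVneq x o0; first by rewrite swap0n0 swap0nn.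
have [->|xn] := eqVneq x on; first by rewrite swap0nn swap0n0.
by rewrite !swap0n_id.
Qed.

Lemma swap0n_eqn x : (swap0n x == on) = (x == o0).
Proof. by rewrite -swap0n0 (can_eq swap0nK). Qed.

Definition swap_tail (e : N * N) : N * N := (swap0n e.1, e.2).

Lemma swap_tailK : involutive swap_tail.
Proof. by case=> x y; rewrite /swap_tail /= swap0nK. Qed.

Lemma swap_tail_inj : injective swap_tail.
Proof. exact: inv_inj swap_tailK. Qed.

Lemma arcD_swap_tail e : arcD n (swap_tail e) = arcDn n e.
Proof.
case: e => i j; rewrite /arcD /arcDn /swap_tail /swap0n /=.
have [->|i0] := eqVneq i o0; first by rewrite eqxx /= !andbF.
have [->|in_] := eqVneq i on.
  rewrite ord0_eq_max xpair_eqE eqxx /= (eq_sym o0 j) (eq_sym on j).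
  by case: (j == o0); case: (j == on).
by rewrite (negbTE in_) xpair_eqE (negbTE i0) /= !andbT.
Qed.

Lemma arcDn_swap_tail e : arcDn n (swap_tail e) = arcD n e.
Proof. by rewrite -{2}(swap_tailK e) arcD_swap_tail. Qed.

Definition arc_to_D (e : arcTDn n) : arcTD n :=
  exist (arcD n) (swap_tail (val e)) (etrans (arcD_swap_tail _) (valP e)).

Definition arc_to_Dn (e : arcTD n) : arcTDn n :=
  exist (arcDn n) (swap_tail (val e)) (etrans (arcDn_swap_tail _) (valP e)).

Lemma arc_to_DK : cancel arc_to_D arc_to_Dn.
Proof. by move=> e; apply: val_inj; rewrite /= swap_tailK. Qed.

Lemma arc_to_DnK : cancel arc_to_Dn arc_to_D.
Proof. by move=> e; apply: val_inj; rewrite /= swap_tailK. Qed.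

Lemma arc_to_D_bij : bijective arc_to_D.
Proof. exact: Bijective arc_to_DK arc_to_DnK. Qed.

Definition relabel {R : Type} (x : arcTD n -> R) : arcTDn n -> R := x \o arc_to_D.

Lemma zip_rcons_l (T1 T2 : Type) (s : seq T1) (u : seq T2) x :
  size s = size u -> zip (rcons s x) u = zip s u.
Proof. by move=> su; rewrite -cats1 -[u]cats0 zip_cat // !cats0. Qed.

Lemma cycle_arcs_cons x s : cycle_arcs n (x :: s) = zip (x :: s) (rcons s x).
Proof. by rewrite /cycle_arcs rot1_cons. Qed.

Lemma unzip1_cycle_arcs (c : seq N) : unzip1 (cycle_arcs n c) = c.
Proof. by rewrite unzip1_zip // size_rot. Qed.

Lemma unzip2_cycle_arcs (c : seq N) : unzip2 (cycle_arcs n c) = rot 1 c.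
Proof. by rewrite unzip2_zip // size_rot. Qed.

Lemma cycle_arcs_uniq (c : seq N) : uniq c -> uniq (cycle_arcs n c).
Proof. by rewrite -{1}(unzip1_cycle_arcs c); apply: map_uniq. Qed.

Lemma cycle_arc_src (c : seq N) e : e \in cycle_arcs n c -> e.1 \in c.
Proof. by move=> ce; rewrite -(unzip1_cycle_arcs c) map_f. Qed.

Lemma cycle_arc_tgt (c : seq N) e : e \in cycle_arcs n c -> e.2 \in c.
Proof. by move=> ce; rewrite -(mem_rot 1) -(unzip2_cycle_arcs c) map_f. Qed.

Lemma cycle_arc_src_neq (c : seq N) x e : x \notin c -> e \in cycle_arcs n c -> e.1 != x.
Proof. by move=> xc ce; apply: contraNneq xc => <-; apply: cycle_arc_src ce. Qed.

Lemma cycle_arc_from (c : seq N) x : x \in c -> exists2 e, e \in cycle_arcs n c & e.1 = x.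
Proof. by rewrite -{1}(unzip1_cycle_arcs c) => /mapP[e ? ->]; exists e. Qed.

Lemma cycle_arc_to (c : seq N) x : x \in c -> exists2 e, e \in cycle_arcs n c & e.2 = x.
Proof.
by rewrite -(mem_rot 1) -{1}(unzip2_cycle_arcs c) => /mapP[e ? ->]; exists e.
Qed.

Lemma cycle_arcs_map (f : N -> N) c :
  cycle_arcs n (map f c) = map (fun e => (f e.1, f e.2)) (cycle_arcs n c).
Proof.
by rewrite /cycle_arcs -map_rot; elim: c (rot 1 c) => [|x c IHc] [|y t] //=; rewrite IHc.
Qed.

Lemma cycle_arcs_rot1 (c : seq N) : cycle_arcs n (rot 1 c) = rot 1 (cycle_arcs n c).
Proof.
case: c => [|x [|y s]] //.
rewrite rot1_cons rcons_cons cycle_arcs_cons [in RHS]cycle_arcs_cons rcons_cons.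
by rewrite [zip (x :: _) _]/= rot1_cons -rcons_cons zip_rcons //= size_rcons.
Qed.

Lemma mem_cycle_arcs_rot k (c : seq N) : cycle_arcs n (rot k c) =i cycle_arcs n c.
Proof.
elim: k => [|k IHk]; first by rewrite rot0.
have [ltkc|lekc] := ltnP k (size c); last by rewrite rot_oversize // ltnW.
by move=> e; rewrite (rotS ltkc) cycle_arcs_rot1 mem_rot IHk.
Qed.

Lemma is_p_cycle_rot A p k (c : seq N) : is_p_cycle n A p c -> is_p_cycle n A p (rot k c).
Proof.
case/and3P=> sc uc Ac; rewrite /is_p_cycle size_rot sc rot_uniq uc /=.
by apply/allP => e; rewrite mem_cycle_arcs_rot => /(allP Ac).
Qed.

Lemma cycle_arc_neq (c : seq N) e : uniq c -> (1 < size c)%N ->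
  e \in cycle_arcs n c -> e.1 != e.2.
Proof.
case: c => [//|x s] uc sc /(nthP (o0, o0)) [i lti <-].
rewrite /cycle_arcs size_zip size_rot minnn /= in lti.
rewrite /cycle_arcs nth_zip ?size_rot //= rot1_cons nth_rcons.
have [ltis|leis] := ltnP i (size s).
  by rewrite -[nth o0 s i]/(nth o0 (x :: s) i.+1) nth_uniq // neq_ltn ltnSn.
have -> : i = size s by apply/eqP; rewrite eqn_leq leis -ltnS lti.
rewrite eqxx [X in _ != X](_ : x = nth o0 (x :: s) 0) // nth_uniq //=.
by rewrite -lt0n.
Qed.

Lemma all_arcDn_cycle (c : seq N) : uniq c -> (1 < size c)%N -> o0 \notin c ->
  all (arcDn n) (cycle_arcs n c).
Proof.
move=> uc sc c0; apply/allP => e ce; rewrite /arcDn (cycle_arc_neq uc sc ce) /=.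
rewrite (cycle_arc_src_neq c0 ce) /=.
by apply: contraNneq c0 => <-; apply: cycle_arc_tgt ce.
Qed.

Lemma cycleDn_notin0 (c : seq N) : all (arcDn n) (cycle_arcs n c) -> o0 \notin c.
Proof.
move=> /allP Ac; apply/negP => /cycle_arc_from[e /Ac].
by case/and3P=> _ + _ e1; rewrite e1 eqxx.
Qed.

Lemma cycleD_notin0n (c : seq N) : all (arcD n) (cycle_arcs n c) -> o0 \notin c /\ on \notin c.
Proof.
move=> /allP Ac; split; apply/negP.
  by move=> /cycle_arc_to[e /Ac]; case/and4P=> _ + _ _ e2; rewrite e2 eqxx.
by move=> /cycle_arc_from[e /Ac]; case/and4P=> _ _ + _ e1; rewrite e1 eqxx.
Qed.

Lemma cycleD_Dn p (c : seq N) : is_p_cycle n (arcD n) p c -> is_p_cycle n (arcDn n) p c.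
Proof.
case/and3P=> sc uc Ac; rewrite /is_p_cycle sc uc /=.
have [c0 _] := cycleD_notin0n Ac.
apply/allP => e ce; have /and4P[e12 e20 _ _] := allP Ac e ce.
by rewrite /arcDn e12 e20 (cycle_arc_src_neq c0 ce).
Qed.

Lemma cycleDn_D p (c : seq N) : is_p_cycle n (arcDn n) p c -> on \notin c ->
  is_p_cycle n (arcD n) p c.
Proof.
case/and3P=> sc uc Ac cn; rewrite /is_p_cycle sc uc /=.
apply/allP => e ce; have e10 : e.1 != o0 by case/and3P: (allP Ac e ce).
rewrite -arcDn_swap_tail /swap_tail swap0n_id ?(cycle_arc_src_neq cn ce) //.
by rewrite -surjective_pairing (allP Ac).
Qed.

Definition path_of (t : seq N) : seq N := o0 :: rcons t on.
Definition cycle_of (t : seq N) : seq N := on :: t.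

Lemma path_arcs_of t : o0 \notin t -> on \notin t ->
  path_arcs n (path_of t) = map swap_tail (cycle_arcs n (cycle_of t)).
Proof.
move=> t0 tn; have tE : map swap0n t = t.
  rewrite -[RHS]map_id; apply/eq_in_map => x xt.
  by apply: swap0n_id; [apply: contraNneq t0 | apply: contraNneq tn] => <-.
have mapE (s u : seq N) : map swap_tail (zip s u) = zip (map swap0n s) u.
  by elim: s u => [|x s IHs] [|y u] //=; rewrite IHs.
rewrite /path_arcs /path_of /cycle_of /= cycle_arcs_cons mapE /= tE swap0nn.
by rewrite -rcons_cons zip_rcons_l // size_rcons.
Qed.

Lemma incid_path_of (R : realFieldType) t e : o0 \notin t -> on \notin t ->
  relabel (incid R n (arcD n) (path_arcs n (path_of t))) e =
  incid R n (arcDn n) (cycle_arcs n (cycle_of t)) e.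
Proof.
by move=> t0 tn; rewrite /relabel /incid /= path_arcs_of // (mem_map swap_tail_inj).
Qed.

Lemma path_ofP p s : is_0n_path n p s -> exists t, [/\ s = path_of t, o0 \notin t & on \notin t].
Proof.
case/and5P; case: s => [//|x s] _ /= /andP[xs us] /eqP x0; subst x.
case/lastP: s xs us => [|t y]; first by rewrite /= ord0_eq_max.
rewrite last_rcons mem_rcons inE negb_or rcons_uniq => /andP[_ t0] /andP[tn _] /eqP yn _.
by subst y; exists t.
Qed.

Lemma cycle_of_path p t : o0 \notin t -> on \notin t ->
  is_0n_path n p (path_of t) -> is_p_cycle n (arcDn n) p (cycle_of t).
Proof.
move=> t0 tn /and5P[sp up _ _ Ap]; apply/and3P; split.
- by move: sp; rewrite /= size_rcons.
- by rewrite /= tn; move: up => /= /andP[_]; rewrite rcons_uniq => /andP[].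
- by move: Ap; rewrite path_arcs_of // all_map; apply: sub_all => e; rewrite /= arcD_swap_tail.
Qed.

Lemma path_of_cycle p t : is_p_cycle n (arcDn n) p (cycle_of t) ->
  [/\ is_0n_path n p (path_of t), o0 \notin t & on \notin t].
Proof.
case/and3P=> sc /= /andP[tn ut] Ac; have := cycleDn_notin0 Ac.
rewrite inE negb_or => /andP[_ t0]; split=> //; apply/and5P; split=> //.
- by move: sc; rewrite /= size_rcons.
- by rewrite /= mem_rcons inE negb_or ord0_eq_max t0 rcons_uniq tn ut.
- by rewrite /= last_rcons.
- by rewrite path_arcs_of // all_map; apply: sub_all Ac => e; rewrite /= arcD_swap_tail.
Qed.

Lemma cycle_through_n p (c : seq N) : is_p_cycle n (arcDn n) p c -> on \in c ->
  exists t, is_p_cycle n (arcDn n) p (cycle_of t) /\ cycle_arcs n (cycle_of t) =i cycle_arcs n c.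
Proof.
move=> cp cn; have /= cE := rot_index cn.
exists (drop (index on c).+1 c ++ take (index on c) c); rewrite /cycle_of -cE.
by split; [apply: is_p_cycle_rot | apply: mem_cycle_arcs_rot].
Qed.
End Relabeling.

Section ArcCounting.
Variable n : nat.
Local Notation N := (node n).
Local Notation on := (@ord_max n).
Local Close Scope ring_scope.

Lemma count_sum (T : Type) (P : pred T) (s : seq T) : count P s = \sum_(x <- s) P x.
Proof. by rewrite -sumn_count sumnE big_map. Qed.

Lemma count_arcs_from_n (C : seq N) (e : N * N) :
  count (fun y => (on, y) == e) C = (e.1 == on) * count_mem e.2 C.
Proof.
case: e => i j /=; rewrite (eq_sym i); have [<-|ni] := eqVneq on i.
  by rewrite mul1n; apply: eq_count => y; rewrite xpair_eqE eqxx.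
by rewrite mul0n -(count_pred0 C); apply: eq_count => y; rewrite xpair_eqE (negbTE ni).
Qed.

Lemma count_arcs_to_n (C : seq N) (e : N * N) :
  count (fun y => (y, on) == e) C = (e.2 == on) * count_mem e.1 C.
Proof.
case: e => i j /=; rewrite (eq_sym j); have [<-|nj] := eqVneq on j.
  by rewrite mul1n; apply: eq_count => y; rewrite xpair_eqE eqxx andbT.
by rewrite mul0n -(count_pred0 C); apply: eq_count => y; rewrite xpair_eqE (negbTE nj) andbF.
Qed.

Lemma count_cycle_arcs_src (Q : pred N) (C : seq N) :
  count (fun e => Q e.1) (cycle_arcs n C) = count Q C.
Proof. by rewrite -[in RHS](unzip1_cycle_arcs C) count_map. Qed.

Lemma count_cycle_arcs_tgt (Q : pred N) (C : seq N) :
  count (fun e => Q e.2) (cycle_arcs n C) = count Q C.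
Proof.
have rotC : perm_eq (rot 1 C) C by rewrite perm_rot.
by rewrite -(permP rotC) -[in RHS](unzip2_cycle_arcs C) count_map.
Qed.

Lemma count_other_nodes (C : seq N) a1 a2 : uniq C -> a1 != a2 -> a1 \in C -> a2 \in C ->
  count (fun x => (x != a1) && (x != a2)) C = (size C).-2.
Proof.
move=> uC a12 a1C a2C.
have := count_predC [predU pred1 a1 & pred1 a2] C.
have := count_predUI (pred1 a1) (pred1 a2) C.
rewrite !count_uniq_mem // a1C a2C.
rewrite (@eq_count _ [predI pred1 a1 & pred1 a2] pred0) => [|x]; last first.
  by rewrite /= -[RHS]/false; apply/andP => -[/eqP -> /eqP]; apply/eqP.
rewrite (@eq_count _ (predC _) (fun x => (x != a1) && (x != a2))) => [|x]; last first.
  by rewrite /= negb_or.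
rewrite count_pred0 addn0 /= => cU <-; rewrite cU; lia.
Qed.

Definition subst_n (x : N) : N -> N := fun y => if y == x then on else y.

(* Renaming the nodes of [C] one at a time, each arc [a] of [C] survives
   [|C| - 2] times and is diverted through [n] once at each end. *)
Lemma sum_count_subst_arc (C : seq N) (a e : N * N) : uniq C -> (1 < size C)%N ->
  a \in cycle_arcs n C ->
  \sum_(x <- C) ((subst_n x a.1, subst_n x a.2) == e : nat) =
  (size C).-2 * (a == e) + ((on, a.2) == e) + ((a.1, on) == e).
Proof.
move=> uC sC aC; have a12 := cycle_arc_neq uC sC aC.
have a1C := cycle_arc_src aC; have a2C := cycle_arc_tgt aC.
case: a a12 a1C a2C {aC} => a1 a2 /= a12 a1C a2C.
have splitE x : ((subst_n x a1, subst_n x a2) == e : nat) =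
    (x == a1) * ((on, a2) == e) + (x == a2) * ((a1, on) == e)
    + ((x != a1) && (x != a2)) * ((a1, a2) == e).
  rewrite /subst_n; have [<-|a1x] := eqVneq a1 x.
    by rewrite (eq_sym a2) (negbTE a12) /= !mul0n !addn0 mul1n.
  by have [->|a2x] := eqVneq a2 x; case: ((a1, a2) == e); case: ((a1, on) == e).
under eq_bigr do rewrite splitE.
rewrite !big_split /= -!big_distrl /= -!count_sum count_other_nodes //.
have c1 := count_uniq_mem a1 uC; have c2 := count_uniq_mem a2 uC.
rewrite a1C in c1; rewrite a2C in c2.
rewrite (@eq_count _ (fun x => x == a1) (pred1 a1)) // c1.
rewrite (@eq_count _ (fun x => x == a2) (pred1 a2)) // c2.
lia.
Qed.

Lemma sum_count_subst (C : seq N) (e : N * N) : uniq C -> (1 < size C)%N ->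
  \sum_(x <- C) count_mem e (cycle_arcs n (map (subst_n x) C)) =
  (size C).-2 * count_mem e (cycle_arcs n C)
  + (e.1 == on) * count_mem e.2 C + (e.2 == on) * count_mem e.1 C.
Proof.
move=> uC sC.
under eq_bigr do rewrite cycle_arcs_map count_map count_sum.
rewrite exchange_big /= (eq_big_seq _ (fun a => sum_count_subst_arc e uC sC)).
rewrite !big_split /= -big_distrr /= -!count_sum.
rewrite (count_cycle_arcs_tgt (fun y => (on, y) == e)).
by rewrite (count_cycle_arcs_src (fun y => (y, on) == e)) count_arcs_from_n count_arcs_to_n.
Qed.

Lemma count_rcons (T : Type) (q : pred T) s x : count q (rcons s x) = count q s + q x.
Proof. by rewrite -cats1 count_cat /= addn0. Qed.

Lemma path_arcs_rcons (y : N) u z :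
  path_arcs n (y :: rcons u z) = rcons (path_arcs n (y :: u)) (last y u, z).
Proof. by elim: u y => [|y' u IHu] y //=; have := IHu y'; rewrite /path_arcs /= => ->. Qed.

Lemma cycle_arcs_closing x s :
  cycle_arcs n (x :: s) = rcons (path_arcs n (x :: s)) (last x s, x).
Proof.
rewrite -path_arcs_rcons /cycle_arcs /path_arcs rot1_cons /=.
by rewrite -rcons_cons zip_rcons_l //= size_rcons.
Qed.

(* Three ways of closing the path [S = s1 :: S'] into a [p]-cycle through [n]
   and an extra node [x]. *)
Definition cycle_nx (S : seq N) x := on :: x :: S.
Definition cycle_xn (S : seq N) x := on :: rcons S x.
Definition cycle_sx (s1 : N) (S' : seq N) x := on :: rcons (rcons S' x) s1.

(* [cycle_nx + cycle_xn - cycle_sx] is the pair of arcs [(n,x), (x,n)] plus a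
   vector that does not depend on [x]; stated without subtraction. *)
Lemma count_star_exchange (s1 s2 : N) S2 v w (e : N * N) :
  let S := s1 :: s2 :: S2 in
  count_mem e (cycle_arcs n (cycle_nx S v)) + count_mem e (cycle_arcs n (cycle_xn S v))
  + count_mem e (cycle_arcs n (cycle_sx s1 (s2 :: S2) w)) + ((on, w) == e) + ((w, on) == e) =
  count_mem e (cycle_arcs n (cycle_nx S w)) + count_mem e (cycle_arcs n (cycle_xn S w))
  + count_mem e (cycle_arcs n (cycle_sx s1 (s2 :: S2) v)) + ((on, v) == e) + ((v, on) == e).
Proof.
move=> S; rewrite /cycle_nx /cycle_xn /cycle_sx.
have nxE x : count_mem e (cycle_arcs n (on :: x :: S)) =
    ((on, x) == e) + ((x, s1) == e) + count_mem e (path_arcs n S) + ((last s2 S2, on) == e).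
  by rewrite cycle_arcs_closing count_rcons /= addnA.
have xnE x : count_mem e (cycle_arcs n (on :: rcons S x)) =
    count_mem e (path_arcs n (on :: S)) + ((last s2 S2, x) == e) + ((x, on) == e).
  by rewrite cycle_arcs_closing count_rcons path_arcs_rcons count_rcons last_rcons.
have sxE x : count_mem e (cycle_arcs n (on :: rcons (rcons (s2 :: S2) x) s1)) =
    count_mem e (path_arcs n (on :: s2 :: S2)) + ((last s2 S2, x) == e)
    + ((x, s1) == e) + ((s1, on) == e).
  by rewrite cycle_arcs_closing count_rcons !path_arcs_rcons !count_rcons !last_rcons.
rewrite !nxE !xnE !sxE; lia.
Qed.
End ArcCounting.

Section CycleSpace.
Variables (R : realFieldType) (n p : nat).
Hypothesis p_ge4 : (4 <= p)%N.
Hypothesis p_lt_n : (p < n)%N.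
Let n_gt0 : (0 < n)%N := leq_ltn_trans (leq0n p) p_lt_n.
Local Notation N := (node n).
Local Notation o0 := (@ord0 n).
Local Notation on := (@ord_max n).
Local Notation V := {ffun option (arcTDn n) -> R^o}.
Local Notation homog := (@homog R (arcTDn n)).

Definition chi (c : seq N) : arcTDn n -> R := incid R n (arcDn n) (cycle_arcs n c).
Definition path_incid (s : seq N) : arcTD n -> R := incid R n (arcD n) (path_arcs n s).

Definition paths : seq (seq N) :=
  [seq s <- map val (enum {: p.+1.-tuple N}) | is_0n_path n p s].

Definition path_space : {vspace V} :=
  <<map (fun s => homog (relabel n_gt0 (path_incid s))) paths>>%VS.

Lemma mem_paths s : is_0n_path n p s -> s \in paths.
Proof.
move=> sp; rewrite mem_filter sp /=; have /and5P[sz _ _ _ _] := sp.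
by apply/mapP; exists (Tuple sz); rewrite ?mem_enum.
Qed.

Lemma homog_chi_through_n c : is_p_cycle n (arcDn n) p c -> on \in c ->
  homog (chi c) \in path_space.
Proof.
move=> cp cn; have [t [tp tE]] := cycle_through_n cp cn.
have [pt t0 tn] := path_of_cycle n_gt0 tp.
rewrite (homog_ext (y := relabel n_gt0 (path_incid (path_of t)))).
  by apply/memv_span/map_f/mem_paths.
by move=> e; rewrite /path_incid incid_path_of // /chi /incid tE.
Qed.

Lemma chi_count c e : uniq c -> chi c e = (count_mem (val e) (cycle_arcs n c))%:R.
Proof. by move=> uc; rewrite /chi /incid count_uniq_mem ?cycle_arcs_uniq //; case: (_ \in _). Qed.

Lemma p_cycleDn c : size c = p -> uniq c -> o0 \notin c -> is_p_cycle n (arcDn n) p c.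
Proof.
move=> sc uc c0; rewrite /is_p_cycle sc eqxx uc /=.
by apply: all_arcDn_cycle => //; rewrite sc; apply: leq_trans p_ge4.
Qed.

Lemma subst_n_cycle C x : is_p_cycle n (arcDn n) p C -> on \notin C -> x \in C ->
  is_p_cycle n (arcDn n) p (map (subst_n x) C) /\ on \in map (subst_n x) C.
Proof.
move=> Cp Cn xC; have /and3P[/eqP sC uC AC] := Cp; have C0 := cycleDn_notin0 AC.
split; last by apply/mapP; exists x; rewrite // /subst_n eqxx.
apply: p_cycleDn; first by rewrite size_map.
  rewrite map_inj_in_uniq // => y z yC zC; rewrite /subst_n.
  have [-> | yx] := eqVneq y x; have [-> | zx] := eqVneq z x => // E.
  - by move: Cn; rewrite E zC.
  - by move: Cn; rewrite -E yC.
apply/mapP => -[y yC]; rewrite /subst_n; case: eqVneq => _; first by apply/eqP; rewrite ord0_eq_max.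
by move=> y0; rewrite y0 yC in C0.
Qed.

Definition star_vec (x : N) : V :=
  [ffun o => if o is Some e then (((on, x) == val e) + ((x, on) == val e))%:R else 0].

Definition homog_unit : V := [ffun o => if o is Some _ then 0 else 1].

Lemma sum_homog_subst C : is_p_cycle n (arcDn n) p C -> on \notin C ->
  \sum_(x <- C) homog (chi (map (subst_n x) C)) =
  (p.-2)%:R *: homog (chi C) + \sum_(x <- C) star_vec x + 2%:R *: homog_unit.
Proof.
move=> Cp Cn; have /and3P[/eqP sC uC _] := Cp.
have scaleE (k x : R) : k *: (x : R^o) = k * x by [].
have subst_uniq x : x \in C -> uniq (map (subst_n x) C).
  by move=> xC; have [/and3P[]] := subst_n_cycle Cp Cn xC.
apply/ffunP => -[e|]; rewrite !ffunE !sum_ffunE /=; last first.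
  under eq_bigr do rewrite ffunE; under [in RHS]eq_bigr do rewrite ffunE.
  rewrite big1_eq addr0 !scaleE !mulr1 (big_nth o0) big_mkord sumr_const card_ord sC.
  by rewrite -natrD; congr (_%:R); lia.
rewrite (eq_big_seq (fun x => (count_mem (val e) (cycle_arcs n (map (subst_n x) C)))%:R)).
  rewrite /star_vec; under [in RHS]eq_bigr do rewrite ffunE.
  rewrite -!natr_sum sum_count_subst // ?sC; last by apply: leq_trans p_ge4.
  rewrite scaler0 addr0 chi_count // scaleE -natrM -!natrD -addnA; congr (_ + _)%:R.
  by rewrite big_split /= -!count_sum count_arcs_from_n count_arcs_to_n.
by move=> x xC; rewrite ffunE chi_count ?subst_uniq.
Qed.

Lemma exists_filler v w : exists s1 s2 S2,
  [/\ size (s1 :: s2 :: S2) = p.-2, uniq (s1 :: s2 :: S2), on \notin s1 :: s2 :: S2,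
      o0 \notin s1 :: s2 :: S2 & v \notin s1 :: s2 :: S2 /\ w \notin s1 :: s2 :: S2].
Proof.
pose P := [pred x : N | [&& x != o0, x != on, x != v & x != w]].
have leP : (p.-2 <= #|P|)%N.
  have leC : (#|[predC P]| <= 4)%N.
    apply: leq_trans (card_size [:: o0; on; v; w]); apply: subset_leq_card.
    by apply/subsetP => x; rewrite !inE /= !negb_and !negbK.
  by have := leq_add (leqnn #|P|) leC; rewrite cardC card_ord; lia.
have [S [sS PS uS]] : exists S : seq N, [/\ size S = p.-2, {in S, forall x, P x} & uniq S].
  exists (take p.-2 (enum P)); split.
  - by rewrite size_takel // -cardE.
  - by move=> x /mem_take; rewrite mem_enum.
  - exact/take_uniq/enum_uniq.
case: S sS PS uS => [|s1 [|s2 S2]] sS PS uS; [by move: sS => /=; lia | by move: sS => /=; lia |].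
exists s1, s2, S2; split=> //.
- by apply/negP => /PS /and4P[_ /eqP].
- by apply/negP => /PS /and4P[/eqP].
- by split; apply/negP => /PS /and4P[_ _ /eqP ? /eqP ?].
Qed.

Lemma star_cycles (s1 : N) (S' : seq N) x :
  size (s1 :: S') = p.-2 -> uniq (s1 :: S') -> on \notin s1 :: S' -> o0 \notin s1 :: S' ->
  x \notin s1 :: S' -> x != on -> x != o0 ->
  [/\ is_p_cycle n (arcDn n) p (cycle_nx (s1 :: S') x),
      is_p_cycle n (arcDn n) p (cycle_xn (s1 :: S') x)
    & is_p_cycle n (arcDn n) p (cycle_sx s1 S' x)].
Proof.
move=> sS uS Sn S0 xS xn x0.
have perm_cycle c : perm_eq c (on :: x :: s1 :: S') -> is_p_cycle n (arcDn n) p c.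
  move: (s1 :: S') sS uS Sn S0 xS => S sS uS Sn S0 xS cE; apply: p_cycleDn.
  - by rewrite (perm_size cE) /= sS; lia.
  - by rewrite (perm_uniq cE) /= inE negb_or eq_sym xn Sn xS uS.
  - by rewrite (perm_mem cE) !inE eq_sym ord_max_eq0 // eq_sym (negbTE x0).
split; apply: perm_cycle => //; apply/permP => q /=; rewrite !count_rcons /=; lia.
Qed.

Lemma star_vec_sub_in_span v w : v != o0 -> v != on -> w != o0 -> w != on ->
  star_vec v - star_vec w \in path_space.
Proof.
move=> v0 vn w0 wn.
have [s1 [s2 [S2 [sS uS Sn S0 [vS wS]]]]] := exists_filler v w.
have [nxv xnv sxv] := star_cycles sS uS Sn S0 vS vn v0.
have [nxw xnw sxw] := star_cycles sS uS Sn S0 wS wn w0.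
pose star x := homog (chi (cycle_nx (s1 :: s2 :: S2) x))
  + homog (chi (cycle_xn (s1 :: s2 :: S2) x)) - homog (chi (cycle_sx s1 (s2 :: S2) x)).
have -> : star_vec v - star_vec w = star v - star w.
  apply/ffunP => -[e|]; rewrite !ffunE /=; last by lra.
  have uniq_of c : is_p_cycle n (arcDn n) p c -> uniq c by case/and3P.
  rewrite !chi_count ?uniq_of //.
  move: (count_star_exchange s1 s2 S2 v w (val e)) => /(congr1 (fun m => m%:R : R)).
  rewrite !natrD; lra.
have through_n c : is_p_cycle n (arcDn n) p c -> on \in c -> homog (chi c) \in path_space.
  exact: homog_chi_through_n.
by rewrite /star !memvB ?memvD ?through_n ?mem_head.
Qed.

(* Summing [sum_homog_subst] for [C] and [C0], the star vectors cancel up to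
   differences lying in [path_space]. *)
Lemma internal_cycle_sub_in_span C C0 :
  is_p_cycle n (arcDn n) p C -> on \notin C -> is_p_cycle n (arcDn n) p C0 -> on \notin C0 ->
  (p.-2)%:R *: (homog (chi C) - homog (chi C0)) \in path_space.
Proof.
move=> Cp Cn C0p C0n.
have shuffle (a b c d e : V) (k : R) :
    k *: (a - b) = (k *: a + c + e - (k *: b + d + e)) - (c - d).
  have scaleE (l y : R) : l *: (y : R^o) = l * y by [].
  by apply/ffunP => o; rewrite !ffunE !scaleE; ring.
rewrite (shuffle _ _ (\sum_(x <- C) star_vec x) (\sum_(x <- C0) star_vec x) (2%:R *: homog_unit)).
rewrite -!sum_homog_subst //.
have subst_in_span D : is_p_cycle n (arcDn n) p D -> on \notin D ->
    \sum_(x <- D) homog (chi (map (subst_n x) D)) \in path_space.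
  move=> Dp Dn; rewrite big_seq; apply: memv_suml => x xD.
  by have [] := subst_n_cycle Dp Dn xD; apply: homog_chi_through_n.
apply: memvB; first by apply: memvB; apply: subst_in_span.
have /and3P[/eqP sC _ /cycleDn_notin0 C0'] := Cp.
have /and3P[/eqP sC0 _ /cycleDn_notin0 C00] := C0p.
rewrite !(big_nth o0) sC sC0 -sumrB big_mkord; apply: memv_suml => i _.
by apply: star_vec_sub_in_span;
  [apply: contraNneq C0' | apply: contraNneq Cn | apply: contraNneq C00 | apply: contraNneq C0n];
  move=> <-; apply: mem_nth; rewrite ?sC ?sC0.
Qed.

Lemma internal_cycle_in_span C C0 :
  is_p_cycle n (arcDn n) p C -> on \notin C -> is_p_cycle n (arcDn n) p C0 -> on \notin C0 ->
  homog (chi C) \in (path_space + <[homog (chi C0)]>)%VS.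
Proof.
move=> Cp Cn C0p C0n; have k0 : (p.-2)%:R != 0 :> R by rewrite pnatr_eq0; lia.
have -> : homog (chi C) = (p.-2)%:R^-1 *: ((p.-2)%:R *: (homog (chi C) - homog (chi C0)))
    + homog (chi C0) by rewrite scalerA mulVf // scale1r subrK.
by apply: memv_add; [apply/memvZ/internal_cycle_sub_in_span | apply: memv_line].
Qed.

Lemma homog_P_cycle_in_span C0 :
  is_p_cycle n (arcDn n) p C0 -> on \notin C0 -> forall x, P_cycle R n p x ->
  homog x \in (path_space + <[homog (chi C0)]>)%VS.
Proof.
move=> C0p C0n x; apply: homog_in_conv => y [c [cp /homog_ext ->]].
have [cn|cn] := boolP (on \in c); last exact: internal_cycle_in_span.
by apply: (subvP (addvSl _ _)); apply: homog_chi_through_n.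
Qed.

Lemma P_cycle_rank_le C0 r :
  is_p_cycle n (arcDn n) p C0 -> on \notin C0 ->
  (forall qs, (forall i, (i < size qs)%N -> P_path R n p (nth (fun _ => 0) qs i)) ->
     aff_indep R (arcTD n) qs -> (size qs <= r.+1)%N) ->
  forall ps, (forall i, (i < size ps)%N -> P_cycle R n p (nth (fun _ => 0) ps i)) ->
     aff_indep R (arcTDn n) ps -> (size ps <= r.+2)%N.
Proof.
move=> C0p C0n rank_paths ps P_ps indep.
apply: (leq_trans (aff_indep_size_le_dim (homog_P_cycle_in_span C0p C0n) P_ps indep)).
apply: (leq_trans (dimv_add_leqif _ _).1); rewrite -[r.+2]addn1 leq_add ?dim_vline ?leq_b1 //.
apply: (dim_span_homog_comp_le (arc_to_D_bij n_gt0) rank_paths (f := path_incid)) => s.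
by rewrite mem_filter => /andP[sp _]; apply: in_conv_point; exists s.
Qed.
End CycleSpace.

Section Lifting.
Variables (R : realFieldType) (n p : nat) (a : node n -> node n -> R) (a0 gamma : R).
Hypothesis p_ge4 : (4 <= p)%N.
Hypothesis p_lt_n : (p < n)%N.
Let n_gt0 : (0 < n)%N := leq_ltn_trans (leq0n p) p_lt_n.
Local Notation N := (node n).
Local Notation o0 := (@ord0 n).
Local Notation on := (@ord_max n).
Local Notation T1 := (arcTD n).
Local Notation T2 := (arcTDn n).
Local Notation nth0 := (nth (fun _ => 0 : R)).

Definition coefD (e : T1) : R := a (val e).1 (val e).2.

Definition lifted_pair (q : N * N) : R :=
  (if q.1 == on then a o0 q.2 else a q.1 q.2) + (if q.1 == on then gamma - a0 else 0).

Definition lifted_coef (e : T2) : R := lifted_pair (val e).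

Definition out0 (e : T1) : R := ((val e).1 == o0)%:R.
Definition out_n (e : T2) : R := ((val e).1 == on)%:R.

Lemma dotp_incid (A : pred (N * N)) (L : seq (N * N)) (G : N * N -> R) :
  uniq L -> all A L -> dotp R {x | A x} (fun e => G (val e)) (incid R n A L) = \sum_(x <- L) G x.
Proof.
move=> uL AL; rewrite /dotp.
under eq_bigr do rewrite /incid -mulrb mulrC mulr_natl mulrb.
rewrite -(big_sub A (fun x => if x \in L then G x else 0)) -big_mkcondr big_uniq //=.
by apply: eq_bigl => x; rewrite andb_idl // => /(allP AL).
Qed.

Lemma dotp_out0_path s : is_0n_path n p s -> dotp R T1 out0 (path_incid R s) = 1.
Proof.
move=> sp; have [t [sE t0 tn]] := path_ofP n_gt0 sp; subst s.
have /and3P[_ uc _] := cycle_of_path n_gt0 t0 tn sp.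
rewrite /path_incid (dotp_incid (fun e => (e.1 == o0)%:R)); first last.
- by case/and5P: sp.
- by rewrite path_arcs_of // (map_inj_uniq (swap_tail_inj n_gt0)) cycle_arcs_uniq.
rewrite -natr_sum -count_sum path_arcs_of // count_map.
rewrite (count_cycle_arcs_src (fun y => swap0n y == o0)) /= swap0nn // eqxx.
rewrite (@eq_in_count _ _ pred0) ?count_pred0 // => y yt /=.
have y0 : y != o0 by apply: contraNneq t0 => <-.
have yn : y != on by apply: contraNneq tn => <-.
by rewrite swap0n_id // (negbTE y0).
Qed.

Lemma dotp_out0_P_path x : P_path R n p x -> dotp R T1 out0 x = 1.
Proof.
by apply: dotp_in_conv_eq => y [s [sp yE]]; rewrite (eq_dotp _ yE) dotp_out0_path.
Qed.

Lemma P_path_relabel x : P_path R n p x -> P_cycle R n p (relabel n_gt0 x).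
Proof.
apply: in_conv_comp => y [s [sp yE]]; have [t [sE t0 tn]] := path_ofP n_gt0 sp.
subst s; exists (cycle_of t); split; first exact: cycle_of_path.
by move=> e; rewrite -incid_path_of //= yE.
Qed.

Lemma lifted_coef_arc_to_Dn e :
  lifted_coef (arc_to_Dn n_gt0 e) = coefD e + (gamma - a0) * out0 e.
Proof.
rewrite /lifted_coef /lifted_pair /coefD /out0 /= swap0n_eqn //.
have [e10|e10] := eqVneq (val e).1 o0; first by rewrite e10 mulr1.
by rewrite swap0n_id ?mulr0 ?addr0 //; case/and4P: (valP e).
Qed.

Lemma dotp_lifted_relabel x :
  dotp R T2 lifted_coef (relabel n_gt0 x) = dotp R T1 coefD x + (gamma - a0) * dotp R T1 out0 x.
Proof.
rewrite /relabel (dotp_comp _ _ (arc_to_DK n_gt0) (arc_to_DnK n_gt0)) /dotp mulr_sumr -big_split.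
by apply: eq_bigr => e _; rewrite /= lifted_coef_arc_to_Dn mulrDl mulrA.
Qed.

Lemma dotp_out_n_relabel x : dotp R T2 out_n (relabel n_gt0 x) = dotp R T1 out0 x.
Proof.
rewrite /relabel (dotp_comp _ _ (arc_to_DK n_gt0) (arc_to_DnK n_gt0)).
by apply: eq_bigr => e _; rewrite /out_n /= swap0n_eqn.
Qed.

Lemma dotp_lifted_chi c : is_p_cycle n (arcDn n) p c -> on \notin c ->
  dotp R T2 lifted_coef (chi R c) = weight R n a (cycle_arcs n c).
Proof.
case/and3P=> _ uc Ac cn; rewrite /chi (dotp_incid lifted_pair) ?cycle_arcs_uniq //.
by apply: eq_big_seq => q qc; rewrite /lifted_pair (negbTE (cycle_arc_src_neq cn qc)) addr0.
Qed.

Lemma dotp_out_n_chi c : is_p_cycle n (arcDn n) p c -> on \notin c ->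
  dotp R T2 out_n (chi R c) = 0.
Proof.
case/and3P=> _ uc Ac cn; rewrite /chi (dotp_incid (fun q => (q.1 == on)%:R)) ?cycle_arcs_uniq //.
by rewrite big1_seq // => q /= qc; rewrite (negbTE (cycle_arc_src_neq cn qc)).
Qed.

Hypothesis coefD_valid : forall x, P_path R n p x -> dotp R T1 coefD x <= a0.
Hypothesis gamma_max :
  forall c, is_p_cycle n (arcD n) p c -> weight R n a (cycle_arcs n c) <= gamma.

Lemma dotp_lifted_P_path x : P_path R n p x -> dotp R T2 lifted_coef (relabel n_gt0 x) <= gamma.
Proof.
move=> Px; rewrite dotp_lifted_relabel dotp_out0_P_path // mulr1.
by have := coefD_valid Px; lra.
Qed.

Lemma lifted_valid x : P_cycle R n p x -> dotp R T2 lifted_coef x <= gamma.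
Proof.
apply: dotp_in_conv_le => y [c [cp yE]]; rewrite (eq_dotp _ yE).
have [cn|cn] := boolP (on \in c); last first.
  by rewrite dotp_lifted_chi // gamma_max // cycleDn_D.
have [t [tp tE]] := cycle_through_n cp cn; have [pt t0 tn] := path_of_cycle n_gt0 tp.
rewrite (@eq_dotp _ _ _ _ (relabel n_gt0 (path_incid R (path_of t)))).
  by apply/dotp_lifted_P_path/in_conv_point; exists (path_of t).
by move=> e; rewrite incid_path_of // /incid tE.
Qed.

Variable C0 : seq (node n).
Hypothesis C0_cycle : is_p_cycle n (arcD n) p C0.
Hypothesis C0_weight : weight R n a (cycle_arcs n C0) = gamma.

(* [out_n] separates [C0], which avoids [n], from the lifted paths. *)
Lemma aff_indep_chi_relabel qs :
  (forall i, (i < size qs)%N -> P_path R n p (nth0 qs i)) -> aff_indep R T1 qs ->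
  aff_indep R T2 (chi R C0 :: map (relabel n_gt0) qs).
Proof.
move=> P_qs indep; have /and3P[_ _ /cycleD_notin0n[_ C0n]] := C0_cycle.
apply: (aff_indep_cons (w := out_n) (w0 := 1)).
- exact: (aff_indep_comp (arc_to_D_bij n_gt0) qs).2 indep.
- move=> i; rewrite size_map => ltiq; rewrite (nth_map (fun _ => 0)) //.
  by rewrite dotp_out_n_relabel dotp_out0_P_path //; apply: P_qs.
- by rewrite dotp_out_n_chi ?cycleD_Dn // eq_sym oner_eq0.
Qed.

Lemma P_cycle_rank r : aff_rank R T1 (P_path R n p) r.+1 -> aff_rank R T2 (P_cycle R n p) r.+2.
Proof.
move=> [[ps [sps [P_ps indep]]] rank_le]; have /and3P[_ _ /cycleD_notin0n[_ C0n]] := C0_cycle.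
split; last exact: (P_cycle_rank_le p_ge4 p_lt_n (cycleD_Dn C0_cycle) C0n rank_le).
exists (chi R C0 :: map (relabel n_gt0) ps); split; first by rewrite /= size_map sps.
split; last exact: aff_indep_chi_relabel.
case=> [_|i] /=; first by apply: in_conv_point; exists C0; rewrite cycleD_Dn.
by rewrite ltnS size_map => ltip; rewrite (nth_map (fun _ => 0)) //; apply/P_path_relabel/P_ps.
Qed.

Lemma lifted_face_rank r :
  aff_rank R T1 (P_path R n p) r.+1 ->
  aff_rank R T1 (fun x => P_path R n p x /\ dotp R T1 coefD x = a0) r ->
  aff_rank R T2 (fun x => P_cycle R n p x /\ dotp R T2 lifted_coef x = gamma) r.+1.
Proof.
move=> rank_P [[ps [sps [F_ps indep]]] rank_F]; have C0Dn := cycleD_Dn C0_cycle.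
have /and3P[_ _ /cycleD_notin0n[_ C0n]] := C0_cycle.
split.
  exists (chi R C0 :: map (relabel n_gt0) ps); split; first by rewrite /= size_map sps.
  split; last by apply: aff_indep_chi_relabel => // i /F_ps[].
  case=> [_|i] /=.
    by rewrite dotp_lifted_chi // C0_weight; split=> //; apply: in_conv_point; exists C0.
  rewrite ltnS size_map => ltip; rewrite (nth_map (fun _ => 0)) //.
  have [Px ax] := F_ps i ltip; split; first exact: P_path_relabel.
  by rewrite dotp_lifted_relabel dotp_out0_P_path // ax mulr1 addrC subrK.
move=> qs F_qs indep_qs; have [y Py ay] := exists_off_face rank_P rank_F.
have := P_cycle_rank_le p_ge4 p_lt_n C0Dn C0n rank_P.2 (ps := relabel n_gt0 y :: qs).
rewrite /= ltnS; apply.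
  by case=> [_|j] /=; [apply: P_path_relabel | rewrite ltnS => /F_qs[]].
apply: (aff_indep_cons (w := lifted_coef) (w0 := gamma)) => // [j /F_qs[] //|].
rewrite dotp_lifted_relabel dotp_out0_P_path // mulr1.
by apply: contra ay => /eqP ?; apply/eqP; lra.
Qed.
End Lifting.

Theorem theorem0 (R : realFieldType) (n p : nat)
    (a : node n -> node n -> R) (a0 gamma : R) :
  (4 <= p)%N -> (p < n)%N ->
  facet_defining R (arcTD n) (P_path R n p) (fun e : arcTD n => a (val e).1 (val e).2) a0 ->
  (exists c, is_p_cycle n (arcD n) p c /\ weight R n a (cycle_arcs n c) = gamma) ->
  (forall c, is_p_cycle n (arcD n) p c -> weight R n a (cycle_arcs n c) <= gamma) ->
  facet_defining R (arcTDn n) (P_cycle R n p)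
    (fun e : arcTDn n =>
       (if (val e).1 == ord_max then a ord0 (val e).2 else a (val e).1 (val e).2)
       + (if (val e).1 == ord_max then gamma - a0 else 0))
    gamma.
Proof.
move=> p_ge4 p_lt_n [valid [r [rank_P rank_F]]] [C0 [C0_cycle C0_weight]] gamma_max.
split; first exact: (lifted_valid p_lt_n valid gamma_max).
exists r.+1; split; first exact: (P_cycle_rank p_ge4 p_lt_n C0_cycle rank_P).
exact: (lifted_face_rank p_ge4 p_lt_n C0_cycle C0_weight rank_P rank_F).
Qed.
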